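(* Let $V$ be a nonempty set, $E\subset V\times V$, $W\subset V$. (a) If $W',W''\subset W$ are such that $W'$ is contained in one equivalence class and $W''$ in another, distinct, equivalence class of the partial equivalence relation $C_W$, then $\operatorname{cl}_W(W')\cap\operatorname{cl}_W(W'')=\emptyset$. (b) Conversely, if $W',W''\subset V$ satisfy $W'\cap W''=\emptyset$, $W'\cup W''=W$ and $\operatorname{cl}_W(W')\cap\operatorname{cl}_W(W'')=\emptyset$, then there do not exist $w'\in W'$ and $w''\in W''$ lying in the same equivalence class of $C_W$ (i.e. with $w'\,C_W\,w''$).
   Context: Relations on $V$: $x\,R\,y$ means $(x,y)\in R$; composition $RR'$: $x(RR')y$ iff there is $z$ with $xRz$ and $zR'y$; $R^{-1}$ is the converse; $R^0=\Delta$, $R^{n+1}=RR^n$, $R^+=\bigcup_{k\ge1}R^k$, $R^*=\bigcup_{k\ge0}R^k$. For $S\subset V$, $\Delta_S=\{(x,x):x\in S\}$, $\Delta=\Delta_V$. For any relation $F$, $\mathcal T_F=\{O\subset V: OF\subset O\}$ is a topology on $V$, where $OF=\{y:\exists o\in O,\ oFy\}$. With $W^c=V\setminus W$: $E_W=\Delta_{W^c}E$; $B_W=E(E_W)^*$; $B_W^-=(B_W)^{-1}=(E_W^{-1})^*E^{-1}$; $K_W=B_W^-\Delta_{W^c}B_W$; $C_W=(\Delta_WK_W\Delta_W)^+\cup\Delta_W$, a symmetric transitive relation (an equivalence relation on $W$). For $S\subset V$, $\operatorname{cl}_W(S)$ is the topological closure of $S$ in the topology $\mathcal T_{E_W}$.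 *)

Set Implicit Arguments.

Section Rel.
Variable V : Type.
Definition rel := V -> V -> Prop.
Definition vset := V -> Prop.

Definition comp (R R' : rel) : rel := fun x y => exists z, R x z /\ R' z y.
Definition conv (R : rel) : rel := fun x y => R y x.
Definition diag (S : vset) : rel := fun x y => S x /\ x = y.
Definition setC (S : vset) : vset := fun x => ~ S x.
Definition setT : vset := fun _ => True.
Fixpoint rpow (R : rel) (n : nat) : rel :=
  match n with
  | O => diag setT
  | S k => comp R (rpow R k)
  end.
Definition rplus (R : rel) : rel := fun x y => exists k, 1 <= k /\ rpow R k x y.
Definition rstar (R : rel) : rel := fun x y => exists k, rpow R k x y.
Definition runion (R R' : rel) : rel := fun x y => R x y \/ R' x y.

Definition E_W (E : rel) (W : vset) : rel := comp (diag (setC W)) E.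
Definition B_W (E : rel) (W : vset) : rel := comp E (rstar (E_W E W)).
Definition Bm_W (E : rel) (W : vset) : rel := conv (B_W E W).
Definition K_W (E : rel) (W : vset) : rel :=
  comp (Bm_W E W) (comp (diag (setC W)) (B_W E W)).
Definition C_W (E : rel) (W : vset) : rel :=
  runion (rplus (comp (diag W) (comp (K_W E W) (diag W)))) (diag W).

Definition image (O : vset) (F : rel) : vset := fun y => exists o, O o /\ F o y.
Definition open_F (F : rel) (O : vset) : Prop := forall y, image O F y -> O y.
Definition closed_F (F : rel) (C : vset) : Prop := open_F F (setC C).
Definition closure_F (F : rel) (S : vset) : vset :=
  fun x => forall C, closed_F F C -> (forall y, S y -> C y) -> C x.
Definition cl_W (E : rel) (W : vset) (S : vset) : vset := closure_F (E_W E W) S.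
End Rel.

From Stdlib Require Import Classical Relation_Operators Operators_Properties.
Set Implicit Arguments.
Unset Strict Implicit.

(* The closed sets of T_F are the sets closed under F-predecessors, so
   cl_W(A) is the set of points from which an E_W-path leads into A. Such a
   path cannot leave a point of W, and from a point u outside W it is an edge
   followed by an E_W-path, i.e. a B_W-step. Hence two points s, t of W have
   closures that meet iff s = t or some u outside W has u B_W s and u B_W t,
   i.e. s K_W t: one step of C_W.
   (a) A common point of the closures of W' and W'' thus links a point of W'
   to a point of W'' by C_W, so the two classes coincide.
   (b) A C_W-chain from W' to W'' has a K_W-step crossing from W' to W''; the
   point u outside W witnessing it lies in both closures. *)

Section Closure.
Variable V : Type.
Variable F : rel V.

Lemma rstar_refl x : rstar F x x.
Proof. exists 0. split; [exact I | reflexivity]. Qed.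

Lemma rstar_step x y z : F x y -> rstar F y z -> rstar F x z.
Proof. intros Hxy [k Hk]. exists (S k). exists y. split; assumption. Qed.

Lemma closed_F_pred (C : vset V) x y : closed_F F C -> F x y -> C y -> C x.
Proof.
  intros HC Hxy Hy. apply NNPP. intro Hx.
  apply (HC y); [exists x; split; assumption | exact Hy].
Qed.

Lemma closure_F_rstar (A : vset V) x :
  closure_F F A x <-> exists s, A s /\ rstar F x s.
Proof.
  split.
  - intro Hx. apply Hx.
    + intros y [o [Ho Hoy]] [s [Hs Hys]].
      apply Ho. exists s. split; [exact Hs | exact (rstar_step Hoy Hys)].
    + intros y Hy. exists y. split; [exact Hy | apply rstar_refl].
  - intros [s [Hs [k Hk]]] C HC HAC. revert x Hk.
    induction k as [|k IH]; intros x Hk.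
    + destruct Hk as [_ ->]. exact (HAC s Hs).
    + destruct Hk as [z [Hxz Hzs]]. exact (closed_F_pred HC Hxz (IH z Hzs)).
Qed.

End Closure.

Section Closures_of_relations.
Variable V : Type.
Variable R : rel V.

Lemma rplus_clos_trans x y : rplus R x y <-> clos_trans V R x y.
Proof.
  split.
  - intros [[|k] [Hk Hxy]]; [inversion Hk |]. clear Hk.
    revert x Hxy. induction k as [|k IH]; intros x [z [Hxz Hzy]].
    + destruct Hzy as [_ <-]. apply t_step. exact Hxz.
    + apply t_trans with z; [apply t_step; exact Hxz | exact (IH z Hzy)].
  - intro Hxy. apply clos_trans_t1n in Hxy.
    induction Hxy as [x y Hxy | x y z Hxy _ [k [Hk Hyz]]].
    + exists 1. split; [auto |]. exists y. split; [exact Hxy | split; [exact I | reflexivity]].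
    + exists (S k). split; [auto |]. exists y. split; assumption.
Qed.

Lemma clos_trans_sym :
  (forall x y, R x y -> R y x) -> forall x y, clos_trans V R x y -> clos_trans V R y x.
Proof.
  intros Hsym x y Hxy. induction Hxy as [x y Hxy | x y z _ IHxy _ IHyz].
  - apply t_step, Hsym, Hxy.
  - exact (t_trans _ _ _ _ _ IHyz IHxy).
Qed.

Lemma clos_trans_crossing (P : vset V) a b :
  clos_trans V R a b -> P a -> ~ P b -> exists x y, R x y /\ P x /\ ~ P y.
Proof.
  intro Hab. induction Hab as [a b Hab | a c b _ IHac _ IHcb]; intros Ha Hb.
  - exists a, b. auto.
  - destruct (classic (P c)) as [Hc | Hc]; auto.
Qed.

End Closures_of_relations.

Section Components.
Variable V : Type.
Variable E : rel V.
Variable W : vset V.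

Definition C_step : rel V := comp (diag W) (comp (K_W E W) (diag W)).

Lemma C_W_clos_trans a b :
  C_W E W a b <-> clos_trans V C_step a b \/ (W a /\ a = b).
Proof. unfold C_W, runion. rewrite rplus_clos_trans. reflexivity. Qed.

Lemma C_step_K_W a b : C_step a b <-> W a /\ K_W E W a b /\ W b.
Proof.
  split.
  - intros [a' [[Ha <-] [b' [Hab [Hb <-]]]]]. auto.
  - intros [Ha [Hab Hb]]. exists a. split; [split; auto |].
    exists b. split; [exact Hab | split; auto].
Qed.

Lemma K_W_sym a b : K_W E W a b -> K_W E W b a.
Proof.
  intros [u [Hua [u' [[Hu <-] Hub]]]].
  exists u. split; [exact Hub |]. exists u. split; [split; auto | exact Hua].
Qed.

Lemma C_W_sym a b : C_W E W a b -> C_W E W b a.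
Proof.
  rewrite !C_W_clos_trans. intros [Hab | [Ha <-]]; [left | right; auto].
  apply clos_trans_sym; [| exact Hab].
  intros x y. rewrite !C_step_K_W. intros [Hx [Hxy Hy]]. auto using K_W_sym.
Qed.

Lemma C_W_trans a b c : C_W E W a b -> C_W E W b c -> C_W E W a c.
Proof.
  rewrite !C_W_clos_trans.
  intros [Hab | [Ha <-]] [Hbc | [Hb <-]]; auto.
  left. exact (t_trans _ _ _ _ _ Hab Hbc).
Qed.

Lemma C_W_of_K_W a b : W a -> W b -> K_W E W a b -> C_W E W a b.
Proof.
  intros Ha Hb Hab. apply C_W_clos_trans. left. apply t_step, C_step_K_W. auto.
Qed.

Lemma rstar_E_W_from_W x s : W x -> rstar (E_W E W) x s -> s = x.
Proof.
  intros Hx [[|k] Hk].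
  - destruct Hk as [_ <-]. reflexivity.
  - destruct Hk as [z [[x' [[Hx' _] _]] _]]. contradiction.
Qed.

Lemma B_W_rstar u s : ~ W u -> B_W E W u s -> rstar (E_W E W) u s.
Proof.
  intros Hu [z [Huz Hzs]]. refine (rstar_step _ Hzs).
  exists u. split; [split; auto | exact Huz].
Qed.

Lemma rstar_B_W x s : ~ W x -> W s -> rstar (E_W E W) x s -> B_W E W x s.
Proof.
  intros Hx Hs [[|k] Hk].
  - destruct Hk as [_ ->]. contradiction.
  - destruct Hk as [z [[x' [[_ <-] Hxz]] Hzs]].
    exists z. split; [exact Hxz | exists k; exact Hzs].
Qed.

Lemma cl_W_meet_C_W (A B : vset V) x :
  (forall s, A s -> W s) -> (forall t, B t -> W t) ->
  cl_W E W A x -> cl_W E W B x -> exists s t, A s /\ B t /\ C_W E W s t.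
Proof.
  intros HAW HBW HAx HBx.
  apply (closure_F_rstar (E_W E W)) in HAx as [s [Hs Hxs]].
  apply (closure_F_rstar (E_W E W)) in HBx as [t [Ht Hxt]].
  exists s, t. split; [exact Hs | split; [exact Ht |]].
  destruct (classic (W x)) as [Hx | Hx].
  - apply rstar_E_W_from_W in Hxs, Hxt; [| exact Hx | exact Hx]. subst s t.
    apply C_W_clos_trans. right. auto.
  - apply C_W_of_K_W; auto.
    exists x. split.
    + exact (rstar_B_W Hx (HAW s Hs) Hxs).
    + exists x. split; [split; auto | exact (rstar_B_W Hx (HBW t Ht) Hxt)].
Qed.

Lemma K_W_cl_W_meet (A B : vset V) p q :
  K_W E W p q -> A p -> B q -> exists u, cl_W E W A u /\ cl_W E W B u.
Proof.
  intros [u [Hup [u' [[Hu <-] Huq]]]] Hp Hq.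
  exists u. split; apply closure_F_rstar.
  - exists p. split; [exact Hp | exact (B_W_rstar Hu Hup)].
  - exists q. split; [exact Hq | exact (B_W_rstar Hu Huq)].
Qed.

End Components.

Theorem lemma2 (V : Type) (v0 : V) (E : V -> V -> Prop) (W : V -> Prop) :
  (* (a) *)
  (forall W' W'' : V -> Prop,
     (forall x, W' x -> W x) -> (forall x, W'' x -> W x) ->
     forall a b : V, W a -> W b -> ~ C_W E W a b ->
     (forall x, W' x -> C_W E W a x) ->
     (forall x, W'' x -> C_W E W b x) ->
     forall x, ~ (cl_W E W W' x /\ cl_W E W W'' x))
  /\
  (* (b) *)
  (forall W' W'' : V -> Prop,
     (forall x, ~ (W' x /\ W'' x)) ->
     (forall x, (W' x \/ W'' x) <-> W x) ->
     (forall x, ~ (cl_W E W W' x /\ cl_W E W W'' x)) ->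
     ~ (exists w' w'', W' w' /\ W'' w'' /\ C_W E W w' w'')).
Proof.
  split.
  - intros W' W'' HW' HW'' a b _ _ Hab Ha Hb x [Hx' Hx''].
    destruct (cl_W_meet_C_W HW' HW'' Hx' Hx'') as [s [t [Hs [Ht Hst]]]].
    apply Hab, C_W_trans with s; [exact (Ha s Hs) |].
    apply C_W_trans with t; [exact Hst | exact (C_W_sym (Hb t Ht))].
  - intros W' W'' Hdisj Hcover Hcl [w' [w'' [Hw' [Hw'' Hw]]]].
    apply C_W_clos_trans in Hw as [Hw | [_ <-]]; [| exact (Hdisj w' (conj Hw' Hw''))].
    destruct (clos_trans_crossing Hw Hw' (fun H => Hdisj w'' (conj H Hw'')))
      as [p [q [Hpq [Hp Hq]]]].
    apply C_step_K_W in Hpq as [_ [Hpq HqW]].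
    destruct (proj2 (Hcover q) HqW) as [Hq' | Hq'']; [contradiction |].
    destruct (K_W_cl_W_meet Hpq Hp Hq'') as [u Hu].
    exact (Hcl u Hu).
Qed.
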